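(* Let $d\ge0$, let $x\in V_d$ and $n:=\mathrm{min.deg}\,x$. Then: (1) There exists $\xi\in\mathfrak g_d^x$ with $\mathrm{min.deg}\,\xi=0$. (2) For any such $\xi$, $$\mathfrak g_d^x=\mathbb C[z]\xi+z^{d+1-n}\mathfrak g_d=\mathbb C\xi\oplus\mathbb C\xi z\oplus\cdots\oplus\mathbb C\xi z^{d-n}\oplus\mathfrak{sl}_2z^{d+1-n}\oplus\cdots\oplus\mathfrak{sl}_2z^d.$$ (3) For $s=2(d+1-n')$ with $n'=0,1,\dots,d+1$, $$(V_d)_{(s)}=\{x'\in V_d:\mathrm{min.deg}\,x'=n'\}=(T\setminus0)z^{n'}\oplus Tz^{n'+1}\oplus\cdots\oplus Tz^d,$$ and for all other values of $s$, $(V_d)_{(s)}=\emptyset$. In particular $\mathrm{mod}(\mathfrak g_d:V_d)=0$, and this value is attained by every nonempty $(V_d)_{(s)}$.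
   Context: $T=\mathbb C^2=\mathbb C\langle e_1,e_2\rangle$ with the standard symplectic form and the standard action of $\mathfrak{sl}_2=\mathfrak{sl}(T)$. $V_d=T\otimes\mathbb C[z]/(z^{d+1})$ and $\mathfrak g_d=\mathfrak{sl}_2\otimes\mathbb C[z]/(z^{d+1})$ (truncated current algebra), acting on $V_d$ by $(\xi z^a)(vz^b)=(\xi v)z^{a+b}$. For $x=x_0+x_1z+\cdots+x_dz^d$ in $V_d$ or $\mathfrak g_d$, $\mathrm{min.deg}\,x=\min\{m:x_m\ne0\}$, with $\mathrm{min.deg}\,0=d+1$. $\mathfrak g_d^x$ is the stabilizer of $x$ in $\mathfrak g_d$. $(V_d)_{(s)}$ is the set of $x\in V_d$ whose orbit under $\mathfrak g_d$ (equivalently under its adjoint group) has dimension $s$, i.e. $\dim\mathfrak g_d.x=s$. The modality is $\mathrm{mod}(\mathfrak g_d:V_d)=\max_{s\ge0}(\dim(V_d)_{(s)}-s)$. *)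

From HB Require Import structures.
From mathcomp Require Import all_boot all_order all_algebra.
From mathcomp Require Import mpoly.
Set Implicit Arguments. Unset Strict Implicit. Unset Printing Implicit Defensive.
Import Order.TTheory GRing.Theory Num.Theory.
Local Open Scope ring_scope.

Section Defs.
Variable C : numClosedFieldType.
Variable d : nat.

(* V_d = T (x) C[z]/(z^{d+1}) : x m = x_m, the coefficient of z^m, in T = C^2 *)
Definition Vd := {ffun 'I_d.+1 -> 'cV[C]_2}.
(* the ambient space of g_d : families (xi_0,...,xi_d) of 2x2 matrices;
   g_d itself is the subspace of families of traceless matrices *)
Definition Gd := {ffun 'I_d.+1 -> 'M[C]_2}.

Definition in_gd (xi : Gd) : bool := [forall m, \tr (xi m) == 0].

(* min.deg, with min.deg 0 = d+1 *)
Definition mindeg (V : nmodType) (f : {ffun 'I_d.+1 -> V}) : nat :=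
  \big[minn/d.+1]_(m < d.+1 | f m != 0) (m : nat).

(* the action (xi z^a)(v z^b) = (xi v) z^(a+b), truncated *)
Definition act (xi : Gd) (x : Vd) : Vd :=
  [ffun m : 'I_d.+1 =>
     \sum_(a < d.+1) \sum_(b < d.+1 | (a + b)%N == (m : nat)) xi a *m x b].

(* multiplication by z^k in g_d *)
Definition zsh (k : nat) (xi : Gd) : Gd :=
  [ffun m : 'I_d.+1 => if (k <= m)%N then xi (inord (m - k)) else 0].

Definition trmap (xi : Gd) : {ffun 'I_d.+1 -> C^o} := [ffun m => \tr (xi m)].
Definition gd_space : {vspace Gd} := lker (linfun trmap).

Definition orbit_space (x : Vd) : {vspace Vd} :=
  (linfun (fun xi : Gd => act xi x) @: gd_space)%VS.
Definition orbit_dim (x : Vd) : nat := \dim (orbit_space x).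

Definition Vstratum (s : nat) : pred Vd := fun x => orbit_dim x == s.

Definition coordV (x : Vd) : 'I_(2 * d.+1) -> C :=
  fun i => x (inord (i %/ 2)) (inord (i %% 2)) 0.

(* the coordinates in J are algebraically independent on S, i.e. the
   projection of S to C^J is Zariski dense *)
Definition alg_indep_on (S : pred Vd) (J : {set 'I_(2 * d.+1)}) : Prop :=
  forall p : {mpoly C[2 * d.+1]},
    (forall m, m \in msupp p -> forall i, i \notin J -> m i = 0%N) ->
    (forall x, S x -> p.@[coordV x] = 0) -> p = 0.

(* S has (algebraic) dimension k: dimension of its Zariski closure, computed as
   the maximal number of coordinates algebraically independent on S
   (Noether normalization).  The empty set has no dimension (= -oo). *)
Definition has_dim (S : pred Vd) (k : nat) : Prop :=
  (exists J, alg_indep_on S J /\ #|J| = k) /\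
  (forall J, alg_indep_on S J -> (#|J| <= k)%N).

(* mod(g_d : V_d) = m, i.e. m = max_s (dim (V_d)_(s) - s), empty strata
   contributing -oo *)
Definition modality_is (m : int) : Prop :=
  (forall s k, has_dim (Vstratum s) k -> (k%:Z - s%:Z <= m)%R) /\
  (exists s k, has_dim (Vstratum s) k /\ k%:Z - s%:Z = m).

End Defs.

From HB Require Import structures.
From mathcomp Require Import all_boot all_order all_algebra.
From mathcomp Require Import mpoly.
From mathcomp Require Import ring zify.
Import Order.TTheory GRing.Theory Num.Theory.
Set Implicit Arguments. Unset Strict Implicit. Unset Printing Implicit Defensive.
Local Open Scope ring_scope.

(* The stabiliser in sl2 of a vector v <> 0 is the line spanned by the nilpotent matrix
   annih v, and sl2 . v = T.  Let n = min.deg x.  The action of M z^k on x vanishes below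
   degree n + k and equals M x_n in degree n + k, so the equations of g_d^x and of
   g_d . x can be solved degree by degree.  Starting from annih x_n this
   produces the element xi of (1); in the stabiliser, the lowest coefficient eta_K of any
   eta with K < d + 1 - n is a multiple of xi_0, which peels off the decomposition (2); and
   every element of z^n V_d is reached, so the orbit has dimension 2 (d + 1 - n).  The
   strata are thus the sets {min.deg = n'}, on which the coordinates of degree >= n' are
   algebraically independent: a polynomial in them vanishing on the stratum becomes zero
   everywhere after multiplication by the coordinate (x_n')_0.  So every nonempty stratum
   has dimension equal to its orbit dimension, and the modality is 0. *)

Section Sl2.
Variable F : fieldType.
Implicit Types (A B : 'M[F]_2) (u v : 'cV[F]_2).

Lemma ord2E : (ord0 = 0 :> 'I_2) * (lift ord0 ord0 = 1 :> 'I_2).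
Proof. by split; apply/val_inj. Qed.

Lemma mulmx2E A v i : (A *m v) i 0 = A i 0 * v 0 0 + A i 1 * v 1 0.
Proof. by rewrite mxE !big_ord_recl big_ord0 addr0 !ord2E. Qed.

Lemma mxtrace2E A : \tr A = A 0 0 + A 1 1.
Proof. by rewrite /mxtrace !big_ord_recl big_ord0 addr0 !ord2E. Qed.

Lemma ord2P (i : 'I_2) : i = 0 \/ i = 1.
Proof. by case: i => [[|[|]]] //= ?; [left | right]; apply/val_inj. Qed.

Lemma matrix2P A B :
  A 0 0 = B 0 0 -> A 0 1 = B 0 1 -> A 1 0 = B 1 0 -> A 1 1 = B 1 1 -> A = B.
Proof.
move=> e00 e01 e10 e11; apply/matrixP => i j.
by case: (ord2P i) => ->; case: (ord2P j) => ->.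
Qed.

Lemma col2P u v : u 0 0 = v 0 0 -> u 1 0 = v 1 0 -> u = v.
Proof. by move=> e0 e1; apply/matrixP => i j; rewrite (ord1 j); case: (ord2P i) => ->. Qed.

Lemma col2_neq0 v : v != 0 -> v 0 0 != 0 \/ v 1 0 != 0.
Proof.
move=> v_neq0; case: (eqVneq (v 0 0) 0) => [v0|]; last by left.
case: (eqVneq (v 1 0) 0) => [v1|]; last by right.
by case/eqP: v_neq0; apply: col2P; rewrite mxE.
Qed.

Definition mx2 (a b c e : F) : 'M[F]_2 :=
  \matrix_(i, j) if i == 0 then if j == 0 then a else b else if j == 0 then c else e.

Lemma mx2E a b c e :
  (mx2 a b c e 0 0 = a) * (mx2 a b c e 0 1 = b) *
  (mx2 a b c e 1 0 = c) * (mx2 a b c e 1 1 = e).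
Proof. by rewrite !mxE. Qed.

(* annih v = v (v^T J) for the symplectic form J: rank one, with kernel and image C v. *)
Definition annih v : 'M[F]_2 :=
  mx2 (v 0 0 * v 1 0) (- v 0 0 ^+ 2) (v 1 0 ^+ 2) (- (v 0 0 * v 1 0)).

Lemma mxtrace_annih v : \tr (annih v) = 0.
Proof. by rewrite mxtrace2E !mx2E subrr. Qed.

Lemma mulmx_annih v : annih v *m v = 0.
Proof. by apply: col2P; rewrite !mulmx2E !mx2E mxE; ring. Qed.

Lemma annih_neq0 v : v != 0 -> annih v != 0.
Proof.
case/col2_neq0 => vi_neq0; apply/eqP => /matrixP.
- by move=> /(_ 0 1); rewrite mx2E mxE => /eqP; rewrite oppr_eq0 sqrf_eq0 (negPf vi_neq0).
- by move=> /(_ 1 0); rewrite mx2E mxE => /eqP; rewrite sqrf_eq0 (negPf vi_neq0).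
Qed.

Lemma sl2_stab_line v A : v != 0 -> \tr A = 0 -> A *m v = 0 ->
  exists l, A = l *: annih v.
Proof.
move=> v_neq0 trA Av0.
have eq0 : A 0 0 * v 0 0 + A 0 1 * v 1 0 = 0 by rewrite -mulmx2E Av0 mxE.
have eq1 : A 1 0 * v 0 0 + A 1 1 * v 1 0 = 0 by rewrite -mulmx2E Av0 mxE.
have A11 : A 1 1 = - A 0 0 by apply/eqP; rewrite -addr_eq0 addrC -mxtrace2E trA.
case: (eqVneq (v 0 0) 0) => [v0 | v0_neq0].
- have v1_neq0 : v 1 0 != 0 by case: (col2_neq0 v_neq0); rewrite ?v0 ?eqxx.
  have A01 : A 0 1 = 0.
    by apply: (mulIf v1_neq0); move: eq0; rewrite v0 mulr0 add0r mul0r.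
  have A00 : A 0 0 = 0.
    apply/eqP; rewrite -oppr_eq0 -A11; apply/eqP/(mulIf v1_neq0).
    by move: eq1; rewrite v0 mulr0 add0r mul0r.
  exists (A 1 0 / v 1 0 ^+ 2).
  by apply: matrix2P; rewrite mxE /annih !mx2E ?A11 ?A00 ?A01 ?v0; field.
- have A00 : A 0 0 = - (A 0 1 * v 1 0) / v 0 0.
    by apply: (canRL (mulfK v0_neq0)); apply/eqP; rewrite -addr_eq0 eq0.
  have A10 : A 1 0 = A 0 0 * v 1 0 / v 0 0.
    by apply: (canRL (mulfK v0_neq0)); apply/eqP; rewrite -subr_eq0 -mulNr -A11 eq1.
  exists (- A 0 1 / v 0 0 ^+ 2).
  by apply: matrix2P; rewrite mxE /annih !mx2E ?A11 ?A10 ?A00; field.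
Qed.

Lemma sl2_stab_colinear v A B : v != 0 ->
  \tr A = 0 -> A *m v = 0 -> \tr B = 0 -> B *m v = 0 -> B != 0 ->
  exists l, A = l *: B.
Proof.
move=> v_neq0 trA Av0 trB Bv0 B_neq0.
have [a ->] := sl2_stab_line v_neq0 trA Av0.
have [b eqB] := sl2_stab_line v_neq0 trB Bv0.
have b_neq0 : b != 0 by apply: contraNneq B_neq0 => b0; rewrite eqB b0 scale0r.
by exists (a / b); rewrite eqB scalerA mulfVK.
Qed.

Lemma sl2_mulmx_onto v u : v != 0 -> exists A, \tr A = 0 /\ A *m v = u.
Proof.
move=> v_neq0; case: (eqVneq (v 0 0) 0) => [v0 | v0_neq0].
- have v1_neq0 : v 1 0 != 0 by case: (col2_neq0 v_neq0); rewrite ?v0 ?eqxx.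
  pose a := - (u 1 0 / v 1 0).
  exists (mx2 a (u 0 0 / v 1 0) 0 (- a)); rewrite mxtrace2E !mx2E subrr.
  by split => //; apply: col2P; rewrite !mulmx2E !mx2E v0 /a; field.
- pose a := u 0 0 / v 0 0.
  exists (mx2 a 0 ((u 1 0 + a * v 1 0) / v 0 0) (- a)); rewrite mxtrace2E !mx2E subrr.
  by split => //; apply: col2P; rewrite !mulmx2E !mx2E /a; field.
Qed.
End Sl2.

Section MinDegree.
Variables (d : nat) (V : nmodType).
Implicit Types f : {ffun 'I_d.+1 -> V}.

Definition vanishes_below f j := forall m : 'I_d.+1, (m < j)%N -> f m = 0.

Lemma mindeg_leq f : (mindeg f <= d.+1)%N.
Proof.
by rewrite /mindeg; elim/big_ind: _ => // [a b|m _]; [rewrite geq_min => -> | exact: ltnW].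
Qed.

Lemma mindeg_leq_coef f (m : 'I_d.+1) : f m != 0 -> (mindeg f <= m)%N.
Proof.
move=> fm; rewrite /mindeg; have := mem_index_enum m.
elim: (index_enum _) => // i r IH; rewrite in_cons big_cons.
case/orP => [/eqP <- | /IH le_m]; first by rewrite fm geq_minl.
by case: ifP => // _; rewrite geq_min le_m orbT.
Qed.

Lemma leq_mindegP f j : (j <= d.+1)%N -> (j <= mindeg f)%N <-> vanishes_below f j.
Proof.
move=> jd; split=> [j_le m mj | f_low].
- by apply/eqP; apply: contraTT mj => /mindeg_leq_coef fm; rewrite -leqNgt (leq_trans j_le).
- rewrite /mindeg; elim/big_ind: _ => // [a b|m fm]; first by rewrite leq_min => ->.
  by rewrite leqNgt; apply: contra fm => /f_low ->.
Qed.

Lemma vanishes_below_mindeg f : vanishes_below f (mindeg f).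
Proof. exact/(leq_mindegP f (mindeg_leq f)). Qed.

Lemma mindeg_coef_neq0 f : (mindeg f <= d)%N -> f (inord (mindeg f)) != 0.
Proof.
move=> f_le; apply/eqP => f0.
suff /leq_mindegP : vanishes_below f (mindeg f).+1 by move/(_ f_le); rewrite ltnn.
move=> m; rewrite ltnS leq_eqVlt => /orP [/eqP m_eq | /vanishes_below_mindeg //].
by rewrite -f0; congr (f _); apply/val_inj; rewrite /= inordK // -m_eq.
Qed.

Lemma mindegP f n : (n <= d.+1)%N -> mindeg f = n <->
  vanishes_below f n /\ (forall m : 'I_d.+1, (m : nat) = n -> f m != 0).
Proof.
move=> nd; split=> [<- | [f_low f_n]].
- split=> [|m m_eq]; first exact: vanishes_below_mindeg.
  have f_le : (mindeg f <= d)%N by rewrite -m_eq -ltnS.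
  by have := mindeg_coef_neq0 f_le; congr (f _ != 0); apply/val_inj; rewrite /= inordK.
- apply/eqP; rewrite eqn_leq (leq_mindegP f nd).2 // andbT.
  case: (ltnP n d.+1) => [n_lt | ]; last by move/(leq_trans (mindeg_leq f)).
  exact: (mindeg_leq_coef (f_n (Ordinal n_lt) erefl)).
Qed.

Lemma mindeg0P f : mindeg f = 0%N <-> f ord0 != 0.
Proof.
rewrite mindegP //; split=> [[_ /(_ ord0)] | f0]; first exact.
by split=> // m /eqP; rewrite -[m == 0%N :> nat]/(m == ord0) => /eqP ->.
Qed.

Lemma vanishes_below_full f : vanishes_below f d.+1 -> f = 0.
Proof. by move=> f_low; apply/ffunP => m; rewrite f_low ?ffunE. Qed.

Lemma vanishes_belowS f j : (j <= d)%N ->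
  vanishes_below f j -> f (inord j) = 0 -> vanishes_below f j.+1.
Proof.
move=> jd f_low fj m; rewrite ltnS leq_eqVlt => /orP [/eqP m_eq | /f_low //].
by rewrite -fj; congr (f _); apply/val_inj; rewrite /= inordK // -m_eq.
Qed.
End MinDegree.

Section VanishingBelow.
Variables (d : nat) (V : zmodType).
Implicit Types f g : {ffun 'I_d.+1 -> V}.

Lemma vanishes_belowBS f g j : (j <= d)%N ->
  vanishes_below f j -> vanishes_below g j -> f (inord j) = g (inord j) ->
  vanishes_below (f - g) j.+1.
Proof.
move=> jd f_low g_low fg; apply: vanishes_belowS => [//|m mj|]; rewrite !ffunE.
  by rewrite f_low // g_low // subrr.
by rewrite fg subrr.
Qed.
End VanishingBelow.

Section Action.
Variables (C : numClosedFieldType) (d : nat).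
Local Notation Vd := (Vd C d).
Local Notation Gd := (Gd C d).
Implicit Types (x y w : Vd) (xi eta theta : Gd) (M : 'M[C]_2).

Lemma act_coef xi x (m : 'I_d.+1) :
  act xi x m = \sum_(b < d.+1 | (b <= m)%N) xi (inord (m - b)) *m x b.
Proof.
rewrite ffunE; under eq_bigr do rewrite big_mkcond.
rewrite exchange_big /= [RHS]big_mkcond; apply: eq_bigr => b _.
have m_le := ltn_ord m; case: (leqP b m) => [b_le | b_gt].
- rewrite -big_mkcond (big_pred1 (inord (m - b))) // => a /=.
  by rewrite -val_eqE /= inordK; [apply/eqP/eqP; lia | lia].
- by rewrite big1 // => a _; case: eqP => //; lia.
Qed.

Definition act_on x xi := act xi x.

Lemma act_on_is_linear x : linear (act_on x).
Proof.
move=> a xi eta; apply/ffunP => m.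
rewrite /act_on act_coef [RHS]ffunE [X in _ = X + _]ffunE !act_coef scaler_sumr -big_split.
by apply: eq_bigr => b _; rewrite !ffunE mulmxDl scalemxAl.
Qed.

HB.instance Definition _ x :=
  GRing.isLinear.Build C Gd Vd *:%R (act_on x) (act_on_is_linear x).

Lemma actB x xi eta : act (xi - eta) x = act xi x - act eta x.
Proof. exact: linearB (act_on x) xi eta. Qed.

Lemma actD x xi eta : act (xi + eta) x = act xi x + act eta x.
Proof. exact: linearD (act_on x) xi eta. Qed.

Lemma act0 x : act 0 x = 0.
Proof. exact: linear0 (act_on x). Qed.

Lemma actZ x a xi : act (a *: xi) x = a *: act xi x.
Proof. exact: linearZ_LR (act_on x) a xi. Qed.

Lemma act_sum x (I : Type) (r : seq I) (P : pred I) (F : I -> Gd) :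
  act (\sum_(i <- r | P i) F i) x = \sum_(i <- r | P i) act (F i) x.
Proof. by apply: (big_morph (act_on x)); [exact: actD | exact: act0]. Qed.

Lemma actx0 xi : act xi 0 = 0.
Proof. by apply/ffunP => m; rewrite act_coef ffunE big1 // => b _; rewrite ffunE mulmx0. Qed.

Lemma act_vanishes_below x xi n k : vanishes_below x n -> vanishes_below xi k ->
  vanishes_below (act xi x) (n + k).
Proof.
move=> x_low xi_low m m_lt; rewrite act_coef big1 // => b b_le.
case: (ltnP b n) => [b_lt | b_ge]; first by rewrite x_low ?mulmx0.
by rewrite xi_low ?mul0mx // inordK; have := ltn_ord m; lia.
Qed.

Lemma act_eq0_high x xi n k : vanishes_below x n -> vanishes_below xi k ->
  (d < n + k)%N -> act xi x = 0.
Proof.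
move=> x_low xi_low nk_gt; apply: vanishes_below_full => m m_lt.
by apply: (act_vanishes_below x_low xi_low); lia.
Qed.

Lemma act_lead x xi n k : vanishes_below x n -> vanishes_below xi k -> (n + k <= d)%N ->
  act xi x (inord (n + k)) = xi (inord k) *m x (inord n).
Proof.
move=> x_low xi_low nk_le; rewrite act_coef (bigD1 (inord n)) /=; last by rewrite !inordK; lia.
rewrite big1 ?addr0 => [|b /andP [b_le b_neq]].
  by congr (xi _ *m _); apply/val_inj; rewrite /= !inordK; lia.
have {}b_neq : (b : nat) != n.
  by apply: contraNneq b_neq => b_eq; apply/eqP/val_inj; rewrite /= inordK; lia.
rewrite inordK in b_le; last lia.
case: (ltnP b n) => [b_lt | b_ge]; first by rewrite x_low ?mulmx0.
by rewrite xi_low ?mul0mx // !inordK; lia.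
Qed.

Lemma act_zsh k xi x (m : 'I_d.+1) :
  act (zsh k xi) x m = if (k <= m)%N then act xi x (inord (m - k)) else 0.
Proof.
have m_le := ltn_ord m; rewrite act_coef; case: ifP => k_le.
- rewrite act_coef inordK; last lia.
  rewrite big_mkcond [RHS]big_mkcond; apply: eq_bigr => b _; rewrite ffunE inordK; last lia.
  repeat case: ifP => ?; rewrite ?mul0mx //; try lia.
  by congr (xi _ *m _); apply/val_inj; rewrite /= !inordK; lia.
- rewrite big1 // => b b_le; rewrite ffunE inordK; last lia.
  by case: ifP => ?; rewrite ?mul0mx //; lia.
Qed.

Lemma act_zsh_eq0 k xi x : act xi x = 0 -> act (zsh k xi) x = 0.
Proof. by move=> xi_x; apply/ffunP => m; rewrite act_zsh xi_x !ffunE if_same. Qed.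

Definition monoz k M : Gd := [ffun m : 'I_d.+1 => if m == k :> nat then M else 0].

Lemma monoz_vanishes_below k M : vanishes_below (monoz k M) k.
Proof. by move=> m m_lt; rewrite ffunE ifF // ltn_eqF. Qed.

Lemma monoz_lead k M : (k <= d)%N -> monoz k M (inord k) = M.
Proof. by move=> k_le; rewrite ffunE inordK ?eqxx. Qed.

Lemma trmap_is_linear : linear (@trmap C d).
Proof. by move=> a xi eta; apply/ffunP => m; rewrite !ffunE mxtraceD mxtraceZ. Qed.

HB.instance Definition _ :=
  GRing.isLinear.Build C Gd {ffun 'I_d.+1 -> C^o} *:%R (@trmap C d) trmap_is_linear.

Lemma mem_gd xi : (xi \in gd_space C d) = in_gd xi.
Proof.
rewrite memv_ker lfunE; apply/eqP/forallP => [/ffunP tr0 m | tr0].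
  by have := tr0 m; rewrite !ffunE => ->.
by apply/ffunP => m; rewrite !ffunE; apply/eqP.
Qed.

Lemma mxtrace_gd xi m : in_gd xi -> \tr (xi m) = 0.
Proof. by move/forallP/(_ m)/eqP. Qed.

Lemma in_gd_zsh k xi : in_gd xi -> in_gd (zsh k xi).
Proof.
by move=> xi_gd; apply/forallP => m; rewrite ffunE; case: ifP; rewrite ?mxtrace_gd ?mxtrace0.
Qed.

Lemma in_gd_monoz k M : \tr M = 0 -> in_gd (monoz k M).
Proof. by move=> trM; apply/forallP => m; rewrite ffunE; case: ifP; rewrite ?trM ?mxtrace0. Qed.

Lemma act_monoz_correct y w k : (mindeg y + k <= d)%N ->
  vanishes_below w (mindeg y + k) ->
  exists M, \tr M = 0 /\ vanishes_below (w - act (monoz k M) y) (mindeg y + k).+1.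
Proof.
set n := mindeg y => nk_le w_low.
have y_low : vanishes_below y n by apply: vanishes_below_mindeg.
have v_neq0 : y (inord n) != 0 by apply: mindeg_coef_neq0; lia.
have [M [trM Mv]] := sl2_mulmx_onto (w (inord (n + k))) v_neq0.
exists M; split => //; apply: vanishes_belowBS => //.
  exact/act_vanishes_below/monoz_vanishes_below.
by rewrite act_lead ?monoz_lead //; [lia | apply: monoz_vanishes_below].
Qed.

Lemma zsh_vanishes_below k xi : vanishes_below (zsh k xi) k.
Proof. by move=> m m_lt; rewrite ffunE ifF //; apply/negbTE; rewrite -ltnNge. Qed.

Definition zdiv k theta : Gd := [ffun m : 'I_d.+1 => theta (inord (m + k))].

Lemma zdivK k theta : vanishes_below theta k -> zsh k (zdiv k theta) = theta.
Proof.
move=> theta_low; apply/ffunP => m; have m_le := ltn_ord m; rewrite !ffunE.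
case: ifP => [k_le | /negbT]; last by rewrite -ltnNge => /theta_low ->.
by congr (theta _); apply/val_inj; rewrite /= !inordK; lia.
Qed.

Lemma in_gd_zdiv k theta : in_gd theta -> in_gd (zdiv k theta).
Proof. by move=> theta_gd; apply/forallP => m; rewrite ffunE mxtrace_gd. Qed.

Lemma act_sum_zsh_eq0 xi x (J : nat) (c : 'I_J -> C) : act xi x = 0 ->
  act (\sum_(k < J) c k *: zsh k xi) x = 0.
Proof.
by move=> xi_x; rewrite act_sum big1 // => k _; rewrite actZ act_zsh_eq0 ?scaler0.
Qed.

Lemma in_gd_sum_zsh xi (J : nat) (c : 'I_J -> C) : in_gd xi ->
  in_gd (\sum_(k < J) c k *: zsh k xi).
Proof.
by move=> xi_gd; rewrite -mem_gd rpred_sum // => k _; rewrite rpredZ // mem_gd in_gd_zsh.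
Qed.
End Action.

Arguments monoz {C d} k M.

Section Existence.
Variables (C : numClosedFieldType) (d : nat) (x : Vd C d).
Local Notation n := (mindeg x).

Lemma stab_approx k : (n <= d)%N -> (0 < k)%N -> (n + k <= d.+1)%N -> exists xi : Gd C d,
  [/\ in_gd xi, xi ord0 = annih (x (inord n)) & vanishes_below (act xi x) (n + k)].
Proof.
move=> n_le; have x_low : vanishes_below x n by apply: vanishes_below_mindeg.
set v := x (inord n); elim: k => [//|[|k] IH] _ nk_le.
  exists (monoz 0 (annih v)); split; first exact/in_gd_monoz/mxtrace_annih.
    by rewrite ffunE.
  rewrite addn1; apply: vanishes_belowS => //.
    by rewrite -[n]addn0; apply/act_vanishes_below/monoz_vanishes_below.
  by rewrite -[n in inord n]addn0 act_lead ?monoz_lead ?mulmx_annih ?addn0.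
have [xi [xi_gd xi0 xi_low]] := IH erefl ltac:(lia).
have [M [trM low]] := act_monoz_correct (ltac:(lia) : (n + k.+1 <= d)%N) xi_low.
exists (xi - monoz k.+1 M); split; last by rewrite actB -addSnnS.
  by rewrite -!mem_gd in xi_gd *; rewrite rpredB // mem_gd in_gd_monoz.
by rewrite !ffunE xi0 subr0.
Qed.

Lemma stab_exists : exists xi : Gd C d, in_gd xi /\ act xi x = 0 /\ mindeg xi = 0%N.
Proof.
have [n_le | n_gt] := leqP n d; last first.
  have e_neq0 : const_mx 1 != 0 :> 'cV[C]_2.
    by apply/eqP => /matrixP/(_ 0 0)/eqP; rewrite !mxE oner_eq0.
  exists (monoz 0 (annih (const_mx 1))); split; first exact/in_gd_monoz/mxtrace_annih.
  split; last by apply/mindeg0P; rewrite ffunE /= annih_neq0.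
  by rewrite (vanishes_below_full (proj1 (leq_mindegP x (leqnn _)) n_gt)) actx0.
have [xi [xi_gd xi0 xi_low]] := stab_approx n_le (k := (d.+1 - n)%N) ltac:(lia) ltac:(lia).
exists xi; split => //; split; last by apply/mindeg0P; rewrite xi0 annih_neq0 ?mindeg_coef_neq0.
by apply: vanishes_below_full; rewrite subnKC ?(leqW n_le) in xi_low.
Qed.
End Existence.

Section Stabilizer.
Variables (C : numClosedFieldType) (d : nat) (x : Vd C d) (xi : Gd C d).
Hypotheses (xi_gd : in_gd xi) (xi_x : act xi x = 0) (xi0_neq0 : xi ord0 != 0).
Local Notation n := (mindeg x).
Local Notation J := (d.+1 - mindeg x)%N.
Implicit Types (eta theta : Gd C d).

Lemma stab_lead_coef eta K : in_gd eta -> act eta x = 0 ->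
  vanishes_below eta K -> (K < J)%N -> exists l, eta (inord K) = l *: xi ord0.
Proof.
move=> eta_gd eta_x eta_low KJ.
have x_low : vanishes_below x n by apply: vanishes_below_mindeg.
have v_neq0 : x (inord n) != 0 by apply: mindeg_coef_neq0; lia.
apply: (sl2_stab_colinear v_neq0); rewrite ?mxtrace_gd //.
  by rewrite -act_lead // ?eta_x ?ffunE //; lia.
have inord0 : inord 0 = ord0 :> 'I_d.+1 by apply/val_inj; rewrite /= inordK.
by rewrite -inord0 -[n in inord n]addn0 -act_lead ?xi_x ?ffunE //; lia.
Qed.

Lemma stab_decomp eta : in_gd eta -> act eta x = 0 ->
  exists (c : 'I_J -> C) theta, [/\ in_gd theta, vanishes_below theta J &
    eta = \sum_(k < J) c k *: zsh k xi + theta].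
Proof.
suff decomp_from K : (K <= J)%N -> forall eta, in_gd eta -> act eta x = 0 ->
    vanishes_below eta (J - K) -> exists (c : 'I_J -> C) theta,
    [/\ in_gd theta, vanishes_below theta J & eta = \sum_(k < J) c k *: zsh k xi + theta].
  by move=> eta_gd eta_x; apply: (decomp_from J) => // m; rewrite subnn.
elim: K => [_ | K IH KJ] {}eta eta_gd eta_x eta_low.
  exists (fun=> 0), eta; rewrite subn0 in eta_low; split => //.
  by rewrite big1 ?add0r // => k _; rewrite scale0r.
have K'J : (J - K.+1 < J)%N by lia.
set K' := (J - K.+1)%N in K'J *.
have [l eta_lead] := stab_lead_coef eta_gd eta_x eta_low K'J.
set eta' := eta - l *: zsh K' xi.
have eta'_gd : in_gd eta'.
  by rewrite -mem_gd rpredB ?rpredZ // mem_gd ?in_gd_zsh.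
have eta'_x : act eta' x = 0 by rewrite actB actZ act_zsh_eq0 // scaler0 subr0.
have eta'_low : vanishes_below eta' (J - K).
  have -> : (J - K = K'.+1)%N by rewrite /K'; lia.
  apply: vanishes_belowBS => //; first by rewrite /K'; lia.
    by move=> m m_lt; rewrite !ffunE ifF ?scaler0 //; apply/negbTE; rewrite -ltnNge.
  by rewrite eta_lead !ffunE inordK ?leqnn ?subnn ?(inord_val ord0) //; rewrite /K'; lia.
have [c [theta [theta_gd theta_low eta'E]]] := IH (ltnW KJ) eta' eta'_gd eta'_x eta'_low.
pose K'o := Ordinal K'J.
have sumE : \sum_(k < J) (c k + (k == K'o)%:R * l) *: zsh k xi =
    \sum_(k < J) c k *: zsh k xi + l *: zsh K' xi.
  under eq_bigr do rewrite scalerDl.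
  rewrite big_split /=; congr (_ + _).
  rewrite (bigD1 K'o) //= eqxx mul1r big1 ?addr0 // => k /negbTE ->.
  by rewrite mul0r scale0r.
exists (fun k => c k + (k == K'o)%:R * l), theta; split => //.
by rewrite sumE addrAC -eta'E subrK.
Qed.

Lemma stab_comb_indep (c : 'I_J -> C) theta : vanishes_below theta J ->
  \sum_(k < J) c k *: zsh k xi + theta = 0 -> (forall k, c k = 0) /\ theta = 0.
Proof.
move=> theta_low comb0.
suff c0 k : c k = 0.
  by split=> //; move: comb0; rewrite big1 ?add0r // => k _; rewrite c0 scale0r.
suff c0_below t (k' : 'I_J) : (k' < t)%N -> c k' = 0 by apply: (c0_below J).
elim: t k' => [//|t IH] k'; rewrite ltnS leq_eqVlt => /orP [/eqP k'_eq | /IH //].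
have k'_le : (k' < d.+1)%N by have := ltn_ord k'; lia.
move/(congr1 (fun f : Gd C d => f (inord k'))): comb0.
rewrite ffunE sum_ffunE theta_low ?inordK // addr0 (bigD1 k') //= big1 ?addr0.
  rewrite !ffunE inordK // leqnn subnn (inord_val ord0) => /eqP.
  by rewrite scaler_eq0 (negPf xi0_neq0) orbF => /eqP.
move=> k'' k''_neq; rewrite !ffunE inordK //; case: ifP => [k''_le | _]; last by rewrite scaler0.
rewrite IH ?scale0r //; move: k''_neq; rewrite -val_eqE /=; lia.
Qed.

Lemma mindeg_addJ_gt : (d < n + J)%N.
Proof. by have := mindeg_leq x; lia. Qed.

Lemma stab_directP eta : in_gd eta && (act eta x == 0) <->
  exists (c : 'I_J -> C) theta, in_gd theta /\ (J <= mindeg theta)%N /\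
    eta = \sum_(k < J) c k *: zsh k xi + theta.
Proof.
have J_le : (J <= d.+1)%N by lia.
split=> [/andP [eta_gd /eqP eta_x] | [c [theta [theta_gd [theta_low ->]]]]].
  have [c [theta [theta_gd theta_low ->]]] := stab_decomp eta_gd eta_x.
  by exists c, theta; rewrite (leq_mindegP theta J_le).
move/(leq_mindegP theta J_le): theta_low => theta_low.
rewrite -mem_gd rpredD ?mem_gd ?in_gd_sum_zsh //=.
rewrite actD act_sum_zsh_eq0 // add0r (act_eq0_high _ theta_low mindeg_addJ_gt) //.
exact: vanishes_below_mindeg.
Qed.

Lemma stab_polyP eta : in_gd eta && (act eta x == 0) <->
  exists (c : 'I_d.+1 -> C) theta,
    in_gd theta /\ eta = \sum_(k < d.+1) c k *: zsh k xi + zsh J theta.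
Proof.
split=> [/andP [eta_gd /eqP eta_x] | [c [theta [theta_gd ->]]]].
  have [c [theta [theta_gd theta_low ->]]] := stab_decomp eta_gd eta_x.
  exists (fun k => oapp c 0 (insub (k : nat))), (zdiv J theta).
  split; first exact: in_gd_zdiv.
  rewrite zdivK //; congr (_ + _).
  under eq_bigr do rewrite -[c _]/(oapp c 0 (Some _)) -valK.
  rewrite (big_ord_widen d.+1 (fun k => oapp c 0 (insub k) *: zsh k xi)); last lia.
  rewrite [LHS]big_mkcond /=; apply: eq_bigr => k _.
  by case: insubP => [k' -> _ | /negbTE ->]; rewrite ?scale0r.
rewrite -mem_gd rpredD ?mem_gd ?in_gd_sum_zsh ?in_gd_zsh //=.
rewrite actD act_sum_zsh_eq0 // add0r (act_eq0_high _ _ mindeg_addJ_gt) //.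
  exact: vanishes_below_mindeg.
exact: zsh_vanishes_below.
Qed.
End Stabilizer.

Section Orbit.
Variables (C : numClosedFieldType) (d : nat).
Local Notation Vd := (Vd C d).
Implicit Types (y w : Vd).

Definition zshiftV j (u : {ffun 'I_(d.+1 - j) -> 'cV[C]_2}) : Vd :=
  [ffun m : 'I_d.+1 => if (j <= m)%N then oapp u 0 (insub (m - j)%N) else 0].

Lemma zshiftV_is_linear j : linear (@zshiftV j).
Proof.
move=> a u u'; apply/ffunP => m; rewrite !ffunE.
case: ifP => _; last by rewrite scaler0 addr0.
by case: insubP => [i _ _ | _] /=; rewrite ?ffunE ?scaler0 ?addr0.
Qed.

HB.instance Definition _ (j : nat) :=
  GRing.isLinear.Build C {ffun 'I_(d.+1 - j) -> 'cV[C]_2} Vd *:%R (@zshiftV j)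
    (@zshiftV_is_linear j).

Definition zV j : {vspace Vd} := limg (linfun (@zshiftV j)).

Lemma memv_zV j w : w \in zV j <-> vanishes_below w j.
Proof.
split=> [/memv_imgP [u _ ->] | w_low].
  by move=> m m_lt; rewrite lfunE ffunE ifF //; apply/negbTE; rewrite -ltnNge.
have -> : w = linfun (@zshiftV j) [ffun i : 'I_(d.+1 - j) => w (inord (i + j))].
  apply/ffunP => m; have m_le := ltn_ord m; rewrite lfunE !ffunE.
  case: ifP => [j_le | /negbT]; last by rewrite -ltnNge => /w_low.
  case: insubP => [i _ i_eq | /negP]; last by lia.
  by rewrite /= ffunE; congr (w _); apply/val_inj => /=; rewrite i_eq subnK // inordK.
by apply: memv_img; apply: memvf.
Qed.

Lemma dim_zV j : \dim (zV j) = (2 * (d.+1 - j))%N.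
Proof.
rewrite limg_dim_eq ?dimvf /dim /= ?card_ord; first by rewrite mulnC.
rewrite capfv; apply/eqP/lker0P => u u'; rewrite !lfunE => eq_u; apply/ffunP => i.
have ij_lt : (i + j < d.+1)%N by have := ltn_ord i; lia.
by move/ffunP/(_ (Ordinal ij_lt)): eq_u; rewrite !ffunE /= leq_addl addnK valK.
Qed.

Lemma mem_orbit y eta : in_gd eta -> act eta y \in orbit_space y.
Proof. by move=> eta_gd; rewrite -[act _ _](lfunE (act_on y)); apply: memv_img; rewrite mem_gd. Qed.

Lemma orbit_spaceE y : orbit_space y = zV (mindeg y).
Proof.
have n_le : (mindeg y <= d.+1)%N := mindeg_leq y.
apply/vspaceP => w; apply/idP/idP => [/memv_imgP [eta] | /memv_zV w_low].
  rewrite mem_gd => eta_gd ->; apply/memv_zV; rewrite (lfunE (act_on y)) -[mindeg y]addn0.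
  by apply: act_vanishes_below => //; apply: vanishes_below_mindeg.
suff orbit_from t : (mindeg y + t <= d.+1)%N ->
    forall w, vanishes_below w (d.+1 - t) -> w \in orbit_space y.
  by apply: (orbit_from (d.+1 - mindeg y)%N); rewrite ?subKn //; lia.
elim: t => [_ | t IH nt] {}w {}w_low.
  by rewrite (vanishes_below_full (w_low : vanishes_below w (d.+1 - 0))) mem0v.
have [k nk] : exists k, (mindeg y + k = d.+1 - t.+1)%N by exists (d - t - mindeg y)%N; lia.
have [M [trM low]] := act_monoz_correct (y := y) (k := k) (w := w) ltac:(lia) ltac:(by rewrite nk).
rewrite -(subrK (act (monoz k M) y) w) memvD ?mem_orbit ?in_gd_monoz //.
by apply: IH; [lia | have -> : (d.+1 - t = (mindeg y + k).+1)%N by lia].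
Qed.

Lemma orbit_dimE y : orbit_dim y = (2 * (d.+1 - mindeg y))%N.
Proof. by rewrite /orbit_dim orbit_spaceE dim_zV. Qed.
End Orbit.

Section VanishingPolynomial.
Variables (R : numDomainType) (N : nat).
Implicit Types (m : 'X_{1..N}) (v w : 'I_N -> R).

Definition monofun m v : R := \prod_i v i ^+ m i.

Lemma monofunM m v w : monofun m (fun i => v i * w i) = monofun m v * monofun m w.
Proof. by rewrite /monofun -big_split; apply: eq_bigr => i _; rewrite exprMn. Qed.

Lemma monofun1 m : monofun m (fun=> 1) = 1.
Proof. by rewrite /monofun big1 // => i _; rewrite expr1n. Qed.

Lemma monofun_bump m i : monofun m (fun k => if k == i then 2 else 1) = 2 ^+ m i.
Proof.
rewrite /monofun (bigD1 i) //= eqxx big1 ?mulr1 // => k /negbTE k_neq.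
by rewrite k_neq expr1n.
Qed.

(* Dedekind's argument: rescaling the variable i by 2 multiplies the monomial m by 2 ^+ m i,
   and subtracting 2 ^+ m0 i times the original relation kills the term of m0. *)
Lemma monofun_free (s : seq 'X_{1..N}) (c : 'X_{1..N} -> R) : uniq s ->
  (forall v, \sum_(m <- s) c m * monofun m v = 0) -> {in s, forall m, c m = 0}.
Proof.
elim: s c => [//|m0 s IH] c /= /andP [m0_notin s_uniq] rel.
have c_s : {in s, forall m, c m = 0}.
  move=> m m_in; have m_neq : m != m0 by apply: contraNneq m0_notin => <-.
  have [i m_i | m_eq] := pickP (fun i => m i != m0 i); last first.
    by case/eqP: m_neq; apply/mnmP => i; apply/eqP/negbFE/m_eq.
  pose w k : R := if k == i then 2 else 1.
  suff /(_ m m_in) /eqP : {in s, forall m, c m * (monofun m w - monofun m0 w) = 0}.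
    rewrite mulf_eq0 !monofun_bump subr_eq0 -!natrX eqr_nat eqn_exp2l //.
    by rewrite (negPf m_i) orbF => /eqP.
  apply: IH => // v.
  have rel_s u : \sum_(m <- s) c m * monofun m u = - (c m0 * monofun m0 u).
    by apply/eqP; rewrite -addr_eq0 addrC; move: (rel u); rewrite big_cons => ->.
  transitivity (\sum_(m <- s) c m * monofun m (fun k => w k * v k)
                - monofun m0 w * \sum_(m <- s) c m * monofun m v).
    by rewrite mulr_sumr -sumrB; apply: eq_bigr => m1 _; rewrite monofunM; ring.
  by rewrite !rel_s monofunM; ring.
have := rel (fun=> 1); rewrite big_cons monofun1 mulr1 big_seq big1 ?addr0.
  by move=> c0 m; rewrite in_cons => /orP [/eqP -> // | /c_s].
by move=> m /c_s ->; rewrite mul0r.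
Qed.

Lemma meval_eq0 (p : {mpoly R[N]}) : (forall v, p.@[v] = 0) -> p = 0.
Proof.
move=> p0; apply/mpolyP => m; rewrite mcoeff0.
have [m_in | /memN_msupp_eq0 //] := boolP (m \in msupp p).
by apply: (monofun_free (c := fun m => p@_m) (msupp_uniq p)) => // v; rewrite -(p0 v) mevalE.
Qed.
End VanishingPolynomial.

Section Dimension.
Variables (C : numClosedFieldType) (d : nat).
Local Notation Vd := (Vd C d).
Local Notation N := (2 * d.+1)%N.
Implicit Types (S : pred Vd) (J : {set 'I_N}) (p : {mpoly C[N]}) (y : Vd).

Lemma card_coord_ge a : #|[set i : 'I_N | (a <= i)%N]| = (N - a)%N.
Proof.
rewrite -sum1_card; have -> : (\sum_(i in [set i : 'I_N | (a <= i)%N]) 1 = \sum_(a <= i < N) 1)%N.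
  by rewrite big_geq_mkord; apply: eq_bigl => i; rewrite inE.
by rewrite sum_nat_const_nat muln1.
Qed.

Lemma meval_eq_on p J (v v' : 'I_N -> C) :
  (forall m, m \in msupp p -> forall i, i \notin J -> m i = 0%N) ->
  {in J, v =1 v'} -> p.@[v] = p.@[v'].
Proof.
move=> p_supp vv'; rewrite !mevalE; apply: eq_big_seq => m m_in; congr (_ * _).
apply: eq_bigr => i _; have [/vv' -> // | i_notin] := boolP (i \in J).
by rewrite p_supp // !expr0.
Qed.

Lemma notin_alg_indep S J i :
  alg_indep_on S J -> (forall y, S y -> coordV y i = 0) -> i \notin J.
Proof.
move=> J_indep Si0; apply/negP => i_in.
have : 'X_i = 0 :> {mpoly C[N]}.
  apply: J_indep => [m /mem_msuppXP <- k k_notin | y /Si0 <-]; last by rewrite mevalXU.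
  by rewrite mnm1E; case: eqP => // ik; move: k_notin; rewrite -ik i_in.
by apply/eqP; rewrite -msupp_eq0 msuppX.
Qed.

Lemma alg_indep_card_le S J j : alg_indep_on S J ->
  (forall y, S y -> vanishes_below y j) -> (#|J| <= 2 * (d.+1 - j))%N.
Proof.
move=> J_indep S_low; have /subset_leq_card : J \subset [set i : 'I_N | (2 * j <= i)%N].
  apply/subsetP => i i_in; rewrite inE leqNgt; apply: contraL i_in => i_lt.
  apply: (notin_alg_indep J_indep) => y /S_low y_low.
  by rewrite /coordV y_low ?mxE // inordK; have := ltn_ord i; lia.
by rewrite card_coord_ge; lia.
Qed.

Lemma VstratumE n y : (n <= d.+1)%N -> Vstratum (2 * (d.+1 - n)) y <-> mindeg y = n.
Proof.
by move=> n_le; rewrite /Vstratum orbit_dimE; have := mindeg_leq y; split=> [/eqP|->//]; lia.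
Qed.

Lemma alg_indep_stratum_card_le s J : alg_indep_on (@Vstratum C d s) J -> (#|J| <= s)%N.
Proof.
move=> J_indep; apply: leq_trans (alg_indep_card_le J_indep (j := (d.+1 - s./2)%N) _) _.
  move=> y /eqP; rewrite orbit_dimE => <-; rewrite mul2n doubleK subKn ?mindeg_leq //.
  exact: vanishes_below_mindeg.
have := odd_double_half s; rewrite -muln2; case: (odd s); lia.
Qed.

Lemma coord_idx_subproof (m : 'I_d.+1) (r : 'I_2) : (2 * m + r < N)%N.
Proof. by have := ltn_ord m; have := ltn_ord r; lia. Qed.

Definition coord_idx m r : 'I_N := Ordinal (coord_idx_subproof m r).

Definition point_of n (v : 'I_N -> C) : Vd :=
  [ffun m : 'I_d.+1 => if (n <= m)%N then \col_r v (coord_idx m r) else 0].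

Lemma coordV_point_of n v (i : 'I_N) : (2 * n <= i)%N -> coordV (point_of n v) i = v i.
Proof.
move=> i_ge; have := ltn_ord i => i_lt.
rewrite /coordV ffunE inordK ?ifT ?mxE; try lia.
by congr (v _); apply/val_inj; rewrite /= !inordK; lia.
Qed.

Lemma mindeg_point_of n v : (n <= d.+1)%N ->
  (forall m : 'I_d.+1, (m : nat) = n -> v (coord_idx m 0) != 0) -> mindeg (point_of n v) = n.
Proof.
move=> n_le v_neq0; apply/mindegP => //; split=> [m m_lt | m m_eq].
  by rewrite ffunE ifF //; apply/negbTE; rewrite -ltnNge.
rewrite ffunE m_eq leqnn; apply: contra (v_neq0 m m_eq) => /eqP/matrixP/(_ 0 0).
by rewrite !mxE => <-.
Qed.

Lemma alg_indep_stratum n : (n <= d.+1)%N ->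
  alg_indep_on (@Vstratum C d (2 * (d.+1 - n))) [set i : 'I_N | (2 * n <= i)%N].
Proof.
move=> n_le p p_supp p_vanish.
have p_point v : p.@[v] = p.@[coordV (point_of n v)].
  by apply: (meval_eq_on p_supp) => i; rewrite inE => /coordV_point_of ->.
have [n_lt | n_ge] := ltnP n d.+1; last first.
  apply: meval_eq0 => v; rewrite p_point p_vanish // VstratumE // mindeg_point_of // => m.
  by have := ltn_ord m; lia.
(* off the hyperplane {v a = 0}, every value of the coordinates of degree >= n is
   realised by a point of the stratum *)
pose a := coord_idx (inord n) 0.
have : p * 'X_a = 0.
  apply: meval_eq0 => v; rewrite mevalM mevalXU.
  have [-> | va_neq0] := eqVneq (v a) 0; first by rewrite mulr0.
  rewrite p_point p_vanish ?mul0r // VstratumE // mindeg_point_of // => m m_eq.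
  by have -> : m = inord n by apply/val_inj; rewrite /= inordK.
have Xa_neq0 : 'X_a != 0 :> {mpoly C[N]} by rewrite -msupp_eq0 msuppX.
by move/eqP; rewrite mulf_eq0 (negPf Xa_neq0) orbF => /eqP.
Qed.

Lemma has_dim_stratum n : (n <= d.+1)%N ->
  has_dim (@Vstratum C d (2 * (d.+1 - n))) (2 * (d.+1 - n)).
Proof.
move=> n_le; split=> [|J]; last exact: alg_indep_stratum_card_le.
exists [set i : 'I_N | (2 * n <= i)%N].
by split; [exact: alg_indep_stratum | rewrite card_coord_ge; lia].
Qed.
End Dimension.

Theorem proposition3p3 (C : numClosedFieldType) (d : nat) :
  forall x : Vd C d,
  let n := mindeg x in
  (* (1) *)
  (exists xi : Gd C d, in_gd xi /\ act xi x = 0 /\ mindeg xi = 0%N) /\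
  (* (2) *)
  (forall xi : Gd C d, in_gd xi -> act xi x = 0 -> mindeg xi = 0%N ->
     (forall eta : Gd C d,
        (in_gd eta && (act eta x == 0)) <->
        (exists (c : 'I_d.+1 -> C) (theta : Gd C d),
           in_gd theta /\ eta = \sum_(k < d.+1) c k *: zsh k xi + zsh (d.+1 - n) theta)) /\
     (forall eta : Gd C d,
        (in_gd eta && (act eta x == 0)) <->
        (exists (c : 'I_(d.+1 - n) -> C) (theta : Gd C d),
           in_gd theta /\ (d.+1 - n <= mindeg theta)%N /\
           eta = \sum_(k < d.+1 - n) c k *: zsh k xi + theta)) /\
     (forall (c : 'I_(d.+1 - n) -> C) (theta : Gd C d),
        in_gd theta -> (d.+1 - n <= mindeg theta)%N ->
        \sum_(k < d.+1 - n) c k *: zsh k xi + theta = 0 ->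
        (forall k, c k = 0) /\ theta = 0)) /\
  (* (3) *)
  ((forall n' : nat, (n' <= d.+1)%N ->
      forall y : Vd C d,
        (@Vstratum C d (2 * (d.+1 - n')) y <-> mindeg y = n') /\
        (mindeg y = n' <->
           (forall m : 'I_d.+1, (m < n')%N -> y m = 0) /\
           (forall m : 'I_d.+1, (m : nat) = n' -> y m != 0))) /\
   (forall s : nat, (forall n' : nat, (n' <= d.+1)%N -> s <> (2 * (d.+1 - n'))%N) ->
      forall y : Vd C d, ~ @Vstratum C d s y) /\
   modality_is C d 0 /\
   (forall s : nat, (exists y, @Vstratum C d s y) -> has_dim (@Vstratum C d s) s)).

Proof.
move=> x n; split; first exact: stab_exists.
split=> [xi xi_gd xi_x /mindeg0P xi0_neq0 | ].
  split; first exact: stab_polyP.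
  split; first exact: stab_directP.
  move=> c theta _ /leq_mindegP theta_low; apply: stab_comb_indep => //.
  by apply: theta_low; rewrite leq_subr.
split=> [n' n'_le y | ]; first by split; [exact: VstratumE | exact: mindegP].
split=> [s s_not y | ].
  by rewrite /Vstratum orbit_dimE => /eqP s_eq; apply: (s_not _ (mindeg_leq y)).
split.
  split=> [s k [[J [/alg_indep_stratum_card_le J_le <-]] _] | ].
    by rewrite subr_le0 lez_nat.
  exists 0%N, 0%N; split; last by rewrite subrr.
  by have := has_dim_stratum C (leqnn d.+1); rewrite subnn muln0.
by move=> s [y]; rewrite /Vstratum orbit_dimE => /eqP <-; apply/has_dim_stratum/mindeg_leq.
Qed.
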